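(* Let $M\in\mathbb{C}^{3\times 3}$ be nonsingular and let $s\in\mathbb{C}^3$ be a nonzero vector such that for every integer $k\ge 1$, $s$ is not a column eigenvector of $M^k$. Let $F_1,F_2,F_3\in\mathbb{C}^{2\times 3}$ with $\mathrm{rank}(F_i)=2$ for $1\le i\le 3$, such that the intersection of the row spaces of $F_1,F_2,F_3$ is $\{0\}$. Then for every positive integer $n$ there exist some $F\in\{F_1,F_2,F_3\}$ and some subset $S\subseteq\{FM^ks: 0\le k\le n^3\}$ with $|S|\ge n$ such that the vectors in $S$ are pairwise linearly independent. *)

From HB Require Import structures.
From mathcomp Require Import all_boot all_order all_algebra.
From mathcomp Require Import complex.
From mathcomp Require Import reals.
Set Implicit Arguments. Unset Strict Implicit. Unset Printing Implicit Defensive.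
Import Order.TTheory GRing.Theory Num.Theory.
Local Open Scope ring_scope.

(* The complex numbers are modelled as R[i] = complex R for R : realType
   (a complete archimedean ordered field, i.e. the reals). *)

Definition col_eigenvector (C : fieldType) (m : nat) (A : 'M[C]_m) (s : 'cV[C]_m) :=
  s != 0 /\ exists lam : C, A *m s = lam *: s.

Definition lin_indep2 (C : fieldType) (m : nat) (u v : 'cV[C]_m) :=
  \rank (row_mx u v) = 2%N.

From HB Require Import structures.
From mathcomp Require Import all_boot all_order all_algebra.
From mathcomp Require Import complex reals.
Set Implicit Arguments. Unset Strict Implicit. Unset Printing Implicit Defensive.
Import Order.TTheory GRing.Theory Num.Theory.
Local Open Scope ring_scope.

(* For j < k the columns M^j s and M^k s are independent, so the 3x2 matrix
   W = [M^j s, M^k s] has a one-dimensional left kernel.  If every F_i W were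
   singular, that kernel would lie in the row space of every F_i, whose
   intersection is 0.  Hence some F_i separates the lines spanned by
   F_i M^j s and F_i M^k s, i.e. k |-> (line of F_i M^k s)_i is injective on
   the n^3 + 1 exponents 0..n^3.  Some coordinate therefore takes more than n
   values, and discarding the zero vector leaves n pairwise independent ones. *)

Section Fibers.
Variables (I : finType) (T : eqType) (f : I -> T).

Definition fiber_rep (k : I) : I := odflt k [pick j | f j == f k].

Lemma fiber_repE k : f (fiber_rep k) = f k.
Proof. by rewrite /fiber_rep; case: pickP => [j /eqP|]. Qed.

Lemma fiber_rep_eq j k : f j = f k -> fiber_rep j = fiber_rep k.
Proof.
move=> e; rewrite /fiber_rep e.
by case: pickP => // /(_ k); rewrite eqxx.
Qed.

Definition fiber_reps : {set I} := [set fiber_rep k | k : I].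

Lemma fiber_reps_inj : {in fiber_reps &, injective f}.
Proof.
move=> _ _ /imsetP[j _ ->] /imsetP[k _ ->].
by rewrite !fiber_repE => /fiber_rep_eq.
Qed.

End Fibers.

Lemma card_leq_prod_fiber_reps (I J : finType) (T : eqType) (f : J -> I -> T) :
  (forall j k, (forall i, f i j = f i k) -> j = k) ->
  (#|I| <= \prod_i #|fiber_reps (f i)|)%N.
Proof.
move=> f_inj; pose reps k : {dffun forall i : J, I} := [ffun i => fiber_rep (f i) k].
have reps_inj : injective reps.
  move=> j k /ffunP e; apply: f_inj => i.
  by rewrite -fiber_repE -[RHS]fiber_repE; have := e i; rewrite !ffunE => ->.
rewrite -cardsXn -(card_imset _ reps_inj); apply/subset_leq_card/subsetP.
move=> _ /imsetP[k _ ->]; apply/setXnP => i; rewrite ffunE.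
exact: imset_f.
Qed.

Lemma exists_ltn_of_expn_ltn_prod (J : finType) (c : J -> nat) n :
  (n ^ #|J| < \prod_i c i)%N -> exists i, (n < c i)%N.
Proof.
move=> lt_prod; apply/existsP; apply: contraTT lt_prod => /existsPn c_le.
rewrite -leqNgt -prod_nat_const; apply: leq_prod => i _.
by rewrite leqNgt c_le.
Qed.

Section ColumnPairs.
Variables (C : fieldType) (m : nat).
Implicit Types u v : 'cV[C]_m.

Lemma rank_row_mx_cV u v : \rank (row_mx u v) = \rank (u^T + v^T)%MS.
Proof. by rewrite -mxrank_tr tr_row_mx addsmxE. Qed.

Lemma lin_indep2_genmx_neq u v : lin_indep2 u v -> <<u^T>>%MS != <<v^T>>%MS.
Proof.
rewrite /lin_indep2 rank_row_mx_cV => rk2; apply/negP => /eqP/genmxP/andP[_ vu].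
move: rk2; rewrite (addsmx_idPl vu).
by have := rank_leq_row u^T; case: (\rank u^T) => [|[|]].
Qed.

Lemma lin_indep2_of_genmx_neq u v :
  u != 0 -> v != 0 -> <<u^T>>%MS != <<v^T>>%MS -> lin_indep2 u v.
Proof.
move=> u0 v0 uv; rewrite /lin_indep2 rank_row_mx_cV.
have rank1 (w : 'cV_m) : w != 0 -> \rank w^T = 1%N by rewrite rank_rV trmx_eq0 => ->.
apply/eqP; rewrite eqn_leq; apply/andP; split.
  apply: leq_trans (mxrank_adds_leqif _ _).1 _.
  by rewrite rank1 // rank1.
rewrite ltnNge; apply: contra uv => le1; apply/eqP/genmxP.
have sum_sub (w : 'cV_m) : w != 0 -> (w^T <= u^T + v^T)%MS -> (u^T + v^T <= w^T)%MS.
  move=> w0 wS; rewrite -(mxrank_leqif_sup wS).2 eqn_leq mxrankS //.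
  by rewrite rank1.
apply/andP; split.
  exact: submx_trans (addsmxSl _ _) (sum_sub v v0 (addsmxSr _ _)).
exact: submx_trans (addsmxSr _ _) (sum_sub u u0 (addsmxSl _ _)).
Qed.

Lemma scale_of_not_lin_indep2 u v : u != 0 -> ~ lin_indep2 u v -> exists c, v = c *: u.
Proof.
move=> u0 dep; have [->|v0] := eqVneq v 0; first by exists 0; rewrite scale0r.
have /eqP/genmxP/andP[_ /sub_rVP[c vu]] : <<u^T>>%MS == <<v^T>>%MS.
  by apply: contraT => uv; case: dep; apply: lin_indep2_of_genmx_neq.
by exists c; apply: trmx_inj; rewrite vu linearZ.
Qed.

End ColumnPairs.

Lemma lin_indep2_orbit (C : fieldType) n (M : 'M[C]_n.+1) (s : 'cV_n.+1) j k :
  M \in unitmx -> (forall d, (1 <= d)%N -> ~ col_eigenvector (M ^+ d) s) ->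
  s != 0 -> (j < k)%N -> lin_indep2 (M ^+ j *m s) (M ^+ k *m s).
Proof.
move=> M_unit not_eigen s0 lt_jk; have Mj_unit : M ^+ j \in unitmx by rewrite unitrX.
have Mjs0 : M ^+ j *m s != 0.
  by apply: contraNneq s0 => Mjs_0; rewrite -(mulKmx Mj_unit s) Mjs_0 mulmx0.
apply/eqP; apply: contraT => /eqP/(scale_of_not_lin_indep2 Mjs0)[c Mks].
case: (not_eigen (k - j)%N); first by rewrite subn_gt0.
split=> //; exists c; apply: (can_inj (mulKmx Mj_unit)).
by rewrite -scalemxAr -Mks mulmxA mulmxE -exprD subnKC // ltnW.
Qed.

Lemma kermx_sub_of_not_row_free (C : fieldType) p m q (F : 'M[C]_(p, m)) (W : 'M_(m, q)) :
  row_free F -> \rank W = m.-1 -> ~~ row_free (F *m W) -> (kermx W <= F)%MS.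
Proof.
move=> F_free rW FW_not_free; pose H := kermx (F *m W) *m F.
have rH : (1 <= \rank H)%N.
  rewrite mxrankMfree // mxrank_ker subn_gt0 ltn_neqAle rank_leq_row andbT.
  exact: FW_not_free.
have HW : (H <= kermx W)%MS by rewrite sub_kermx -mulmxA mulmx_ker.
have WH : (kermx W <= H)%MS.
  rewrite -(mxrank_leqif_sup HW).2 eqn_leq mxrankS //=.
  by rewrite mxrank_ker rW (leq_trans _ rH) // leq_subLR addn1 leqSpred.
exact: submx_trans WH (submxMl _ _).
Qed.

Lemma row_free_mul_of_capmx3_eq0 (C : fieldType) p1 p2 p3 m q
    (F1 : 'M[C]_(p1, m.+1)) (F2 : 'M_(p2, m.+1)) (F3 : 'M_(p3, m.+1)) (W : 'M_(m.+1, q)) :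
  row_free F1 -> row_free F2 -> row_free F3 -> (F1 :&: F2 :&: F3)%MS = 0 ->
  \rank W = m ->
  [\/ row_free (F1 *m W), row_free (F2 *m W) | row_free (F3 *m W)].
Proof.
move=> F1_free F2_free F3_free cap0 rW.
have [] := boolP (row_free (F1 *m W)); first by constructor 1.
have [] := boolP (row_free (F2 *m W)); first by constructor 2.
have [] := boolP (row_free (F3 *m W)); first by constructor 3.
move=> F3W F2W F1W; have : (kermx W <= F1 :&: F2 :&: F3)%MS.
  by rewrite !sub_capmx !kermx_sub_of_not_row_free.
by rewrite cap0 submx0 -mxrank_eq0 mxrank_ker rW subSnn.
Qed.

Section SpanRepresentatives.
Variables (C : fieldType) (m : nat) (I : finType) (g : I -> 'cV[C]_m).

(* <<u^T>> is a canonical representative of the line spanned by u. *)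
Definition span_reps : {set I} := fiber_reps (fun k => <<(g k)^T>>%MS).

Definition nonzero_span_reps : {set I} := span_reps :\: [set k | g k == 0%R].

Lemma span_reps_inj : {in span_reps &, injective (fun k => <<(g k)^T>>%MS)}.
Proof. exact: fiber_reps_inj. Qed.

Lemma card_nonzero_span_reps : (#|span_reps|.-1 <= #|nonzero_span_reps|)%N.
Proof.
have zero_le1 : (#|span_reps :&: [set k | g k == 0%R]| <= 1)%N.
  apply/card_le1_eqP => j k; rewrite !inE => /andP[Rj /eqP gj0] /andP[Rk /eqP gk0].
  by apply: (span_reps_inj Rk Rj) => /=; rewrite gj0 gk0.
by rewrite cardsD -subn1 leq_sub2l.
Qed.

Lemma nonzero_span_reps_lin_indep2 :
  {in nonzero_span_reps &, forall j k, j != k -> lin_indep2 (g j) (g k)}.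
Proof.
move=> j k; rewrite !inE => /andP[gj0 Rj] /andP[gk0 Rk] jk.
apply: lin_indep2_of_genmx_neq => //.
by apply: contraNneq jk => /(span_reps_inj Rj Rk) ->.
Qed.

End SpanRepresentatives.

Theorem lemma3p1 (R : realType) (M : 'M[R[i]]_3) (s : 'cV[R[i]]_3)
  (F1 F2 F3 : 'M[R[i]]_(2, 3)) :
  M \in unitmx ->
  s != 0 ->
  (forall k : nat, (1 <= k)%N -> ~ col_eigenvector (M ^+ k) s) ->
  \rank F1 = 2%N -> \rank F2 = 2%N -> \rank F3 = 2%N ->
  (F1 :&: F2 :&: F3)%MS = 0 ->
  forall n : nat, (0 < n)%N ->
  exists F : 'M[R[i]]_(2, 3), (F = F1 \/ F = F2 \/ F = F3) /\
  exists S : seq 'cV[R[i]]_2,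
    [/\ uniq S, (n <= size S)%N,
        (forall v, v \in S -> exists2 k : nat, (k <= n ^ 3)%N & v = F *m (M ^+ k *m s)) &
        (forall u v, u \in S -> v \in S -> u != v -> lin_indep2 u v)].
Proof.
move=> M_unit s0 not_eigen rF1 rF2 rF3 cap0 n _.
have [F1_free F2_free F3_free] : [/\ row_free F1, row_free F2 & row_free F3].
  by rewrite /row_free rF1 rF2 rF3.
pose Fs := [tuple F1; F2; F3].
pose g i (k : 'I_(n ^ 3).+1) := tnth Fs i *m (M ^+ k *m s).
have separated (j k : 'I_(n ^ 3).+1) : (j < k)%N -> exists i, lin_indep2 (g i j) (g i k).
  move=> /(lin_indep2_orbit M_unit not_eigen s0) W_free.
  have [] := row_free_mul_of_capmx3_eq0 F1_free F2_free F3_free cap0 W_free;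
    rewrite mul_mx_row => /eqP FW_free; [exists 0 | exists 1 | exists 2]; exact: FW_free.
have g_inj (j k : 'I_(n ^ 3).+1) : (forall i, <<(g i j)^T>>%MS = <<(g i k)^T>>%MS) -> j = k.
  move=> g_jk; case: (ltngtP j k) => [lt_jk | lt_kj | /val_inj //].
    by have [i /lin_indep2_genmx_neq] := separated _ _ lt_jk; rewrite g_jk eqxx.
  by have [i /lin_indep2_genmx_neq] := separated _ _ lt_kj; rewrite g_jk eqxx.
have [i lt_n] : exists i, (n < #|span_reps (g i)|)%N.
  apply: exists_ltn_of_expn_ltn_prod; rewrite card_ord.
  by apply: leq_trans (card_leq_prod_fiber_reps g_inj); rewrite card_ord.
have indep := @nonzero_span_reps_lin_indep2 _ _ _ (g i).
exists (tnth Fs i); split.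
  by have := mem_tnth i Fs; rewrite !inE => /or3P[]/eqP ->; tauto.
exists (map (g i) (enum (nonzero_span_reps (g i)))); split.
- rewrite map_inj_in_uniq ?enum_uniq // => j k; rewrite !mem_enum => Rj Rk g_jk.
  apply/eqP; apply: contraT => /(indep j k Rj Rk)/lin_indep2_genmx_neq.
  by rewrite g_jk eqxx.
- rewrite size_map -cardE; apply: leq_trans (card_nonzero_span_reps (g i)).
  by case: #|span_reps (g i)| lt_n.
- by move=> _ /mapP[k _ ->]; exists k; rewrite // -ltnS.
- move=> _ _ /mapP[j + ->] /mapP[k + ->]; rewrite !mem_enum => Rj Rk g_jk.
  by apply: indep => //; apply: contra_neq g_jk => ->.
Qed.
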